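(* Fix a monomial order on $S$. If $J$ is an ideal of $S$ and $(E_i)_{i\in\Lambda}$ is a family of monomial ideals of $S$ such that $(J,E_i)$ is a G-nice pair for all $i\in\Lambda$, then $(J,\sum_{i\in\Lambda}E_i)$ is a G-nice pair.
   Context: $K$ is a field and $S=K[x_1,\ldots,x_n]$ with a fixed monomial order. For $0\neq f\in S$, $\mathrm{in}(f)$ denotes its leading monomial; for an ideal $I$, $\mathrm{in}(I)$ is the ideal generated by the leading monomials of the nonzero elements of $I$. A pair $(J,E)$ of ideals of $S$ is called Gröbner nice (G-nice) if $\mathrm{in}(J+E)=\mathrm{in}(J)+\mathrm{in}(E)$. *)

From HB Require Import structures.
From mathcomp Require Import all_boot all_order all_algebra.
From mathcomp Require Import mpoly.
Set Implicit Arguments. Unset Strict Implicit. Unset Printing Implicit Defensive.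
Import GRing.Theory.
Local Open Scope ring_scope.

(* Monomials of S = K[x_1,...,x_n] are the multinomials 'X_{1..n}
   (exponent vectors); the monomial with exponent m is 'X_[m]. *)

Record monomial_order (n : nat) (le : 'X_{1..n} -> 'X_{1..n} -> Prop) : Prop := {
  mo_refl  : forall m, le m m;
  mo_anti  : forall m1 m2, le m1 m2 -> le m2 m1 -> m1 = m2;
  mo_trans : forall m1 m2 m3, le m1 m2 -> le m2 m3 -> le m1 m3;
  mo_total : forall m1 m2, le m1 m2 \/ le m2 m1;
  mo_mul   : forall m1 m2 m, le m1 m2 -> le (m1 + m)%MM (m2 + m)%MM;
  mo_wf    : well_founded (fun m1 m2 => le m1 m2 /\ m1 <> m2)
}.

Definition is_lead (K : fieldType) (n : nat) (le : 'X_{1..n} -> 'X_{1..n} -> Prop)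
  (f : {mpoly K[n]}) (m : 'X_{1..n}) : Prop :=
  m \in msupp f /\ forall m', m' \in msupp f -> le m' m.

Definition is_ideal (K : fieldType) (n : nat) (I : {mpoly K[n]} -> Prop) : Prop :=
  [/\ I 0,
      forall f g, I f -> I g -> I (f + g)
    & forall f g, I g -> I (f * g)].

Definition ideal_gen (K : fieldType) (n : nat) (G : {mpoly K[n]} -> Prop)
  : {mpoly K[n]} -> Prop :=
  fun f => exists s : seq ({mpoly K[n]} * {mpoly K[n]}),
    (forall pq, pq \in s -> G pq.2) /\ f = \sum_(pq <- s) pq.1 * pq.2.

Definition is_monomial_ideal (K : fieldType) (n : nat) (E : {mpoly K[n]} -> Prop)
  : Prop :=
  is_ideal E /\ exists M : 'X_{1..n} -> Prop,
    forall f, E f <-> ideal_gen (fun g => exists m, M m /\ g = 'X_[m]) f.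

Definition ideal_add (K : fieldType) (n : nat) (I J : {mpoly K[n]} -> Prop) :=
  ideal_gen (fun f => I f \/ J f).

Definition ideal_bigsum (K : fieldType) (n : nat) (L : Type)
  (E : L -> {mpoly K[n]} -> Prop) :=
  ideal_gen (fun f => exists i, E i f).

Definition init_ideal (K : fieldType) (n : nat) (le : 'X_{1..n} -> 'X_{1..n} -> Prop)
  (I : {mpoly K[n]} -> Prop) : {mpoly K[n]} -> Prop :=
  ideal_gen (fun g => exists f m, [/\ I f, f != 0, is_lead le f m & g = 'X_[m]]).

Definition gnice (K : fieldType) (n : nat) (le : 'X_{1..n} -> 'X_{1..n} -> Prop)
  (J E : {mpoly K[n]} -> Prop) : Prop :=
  forall f, init_ideal le (ideal_add J E) f <->
            ideal_add (init_ideal le J) (init_ideal le E) f.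

(* The inclusion in(J) + in(B) <= in(J + B) is monotonicity of
   in(-); the content is the converse, i.e. that every leading monomial u of an
   element f of J + B lies in in(J) or in some E_i.

   The tool is the normal form modulo J: an r with f - r in J and no
   monomial of r in in(J); it exists by well-founded induction along the monomial
   order and is additive in f.  G-niceness of (J, E_i) means exactly that normal
   forms of elements of E_i only involve monomials of E_i.  By additivity, normal
   forms of elements of J + B only involve monomials of the E_i; and a leading
   monomial of f which is not in in(J) survives in its normal form. *)

From mathcomp Require Import all_boot all_order all_algebra.
From mathcomp Require Import mpoly.
From mathcomp Require Import ring.
From Stdlib Require Import Classical ClassicalEpsilon.
Set Implicit Arguments. Unset Strict Implicit. Unset Printing Implicit Defensive.
Import GRing.Theory.
Local Open Scope ring_scope.

Section Ideals.
Variables (K : fieldType) (n : nat).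
Local Notation poly := {mpoly K[n]}.
Implicit Types (G P I : poly -> Prop) (f g p q : poly).

Lemma ideal_gen_in G g : G g -> ideal_gen G g.
Proof.
by move=> Gg; exists [:: (1, g)]; rewrite big_seq1 mul1r; split=> // pq; rewrite inE => /eqP ->.
Qed.

Lemma ideal_gen_ind G P :
  P 0 -> (forall f g, P f -> P g -> P (f + g)) -> (forall q g, G g -> P (q * g)) ->
  forall f, ideal_gen G f -> P f.
Proof.
move=> P0 PD PM f [s [Gs ->]]; elim: s Gs => [|pq s IH] Gs; first by rewrite big_nil.
rewrite big_cons; apply: PD; first by apply/PM/Gs/mem_head.
by apply: IH => pq' pq's; apply: Gs; rewrite inE pq's orbT.
Qed.

Lemma ideal_gen_ideal G : is_ideal (ideal_gen G).
Proof.
split; first by exists [::]; rewrite big_nil.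
- move=> f g [s [Gs ->]] [t [Gt ->]]; exists (s ++ t); rewrite big_cat; split=> // pq.
  by rewrite mem_cat => /orP[/Gs|/Gt].
- move=> f g [s [Gs ->]]; exists [seq (f * pq.1, pq.2) | pq <- s]; split.
    by move=> pq /mapP[pq' /Gs Gpq' ->].
  by rewrite big_map mulr_sumr; apply: eq_bigr => pq _; rewrite mulrA.
Qed.

Lemma ideal_gen_min G I : is_ideal I -> (forall g, G g -> I g) ->
  forall f, ideal_gen G f -> I f.
Proof. by move=> [I0 ID IM] GI; apply: ideal_gen_ind => // q g /GI; apply: IM. Qed.

Lemma ideal_mul I f g : is_ideal I -> I g -> I (f * g).
Proof. by case=> _ _; apply. Qed.

Lemma ideal_sub I f g : is_ideal I -> I f -> I g -> I (f - g).
Proof. by move=> [_ ID IM] If Ig; apply: ID => //; rewrite -mulN1r; apply: IM. Qed.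

Lemma ideal_scale I c f : is_ideal I -> I f -> I (c *: f).
Proof. by move=> HI If; rewrite -mul_mpolyC; apply: ideal_mul. Qed.

End Ideals.

Section Supports.
Variables (K : fieldType) (n : nat).
Local Notation poly := {mpoly K[n]}.
Local Notation mono := 'X_{1..n}.
Implicit Types (G : poly -> Prop) (f g p : poly) (m k : mono) (M U : mono -> Prop).

Definition upset M m := exists m0 k, M m0 /\ m = (m0 + k)%MM.

Lemma upset_self M m : M m -> upset M m.
Proof. by move=> Mm; exists m, 0%MM; rewrite addm0. Qed.

Lemma upsetD M m k : upset M m -> upset M (m + k)%MM.
Proof. by move=> [m0 [k0 [Mm0 ->]]]; exists m0, (k0 + k)%MM; rewrite addmA. Qed.

Definition supported_in U p := forall m, m \in msupp p -> U m.

Lemma supported_ideal U :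
  (forall m k, U m -> U (m + k)%MM) -> is_ideal (supported_in U).
Proof.
move=> Uup; split; first by move=> m; rewrite msupp0.
- by move=> f g Uf Ug m /msuppD_le; rewrite mem_cat => /orP[/Uf|/Ug].
- move=> f g Ug m /msuppM_le /allpairsP[[m1 m2] /= [_ /Ug Um2 ->]].
  by rewrite addmC; apply: Uup.
Qed.

Lemma supported_gen U G :
  (forall m k, U m -> U (m + k)%MM) -> (forall g, G g -> supported_in U g) ->
  forall f, ideal_gen G f -> supported_in U f.
Proof. by move=> Uup; apply: ideal_gen_min; apply: supported_ideal. Qed.

Lemma supported_X U m : U m -> supported_in U ('X_[m] : poly).
Proof. by move=> Um m'; rewrite msuppX inE => /eqP ->. Qed.

Lemma monomial_ideal_supp E p :
  is_monomial_ideal E -> E p -> forall m, m \in msupp p -> E 'X_[m].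
Proof.
move=> [HE [M HM]] /HM Ep m mp.
have [|m0 [k [Mm0 ->]]] := supported_gen (@upsetD M) _ Ep mp.
  by move=> g [m0 [Mm0 ->]]; apply: supported_X; apply: upset_self.
rewrite mpolyXD mulrC; apply: ideal_mul => //; apply/HM/ideal_gen_in.
by exists m0.
Qed.

Definition mproj U p : poly :=
  \sum_(m <- msupp p)
     ((if excluded_middle_informative (U m) then p@_m else 0) *: 'X_[m]).

Lemma coef_sum_monos (s : seq mono) (c : mono -> K) k :
  uniq s -> (forall m, m \notin s -> c m = 0) ->
  (\sum_(m <- s) c m *: ('X_[m] : poly))@_k = c k.
Proof.
move=> us c0; rewrite raddf_sum /=.
have Xk m : (c m *: ('X_[m] : poly))@_k = if m == k then c k else 0.
  by rewrite mcoeffZ mcoeffX; case: eqP => [->|_]; rewrite ?mulr1 ?mulr0.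
case ks: (k \in s).
  rewrite (bigD1_seq k) //= Xk eqxx big1 ?addr0 // => m /negbTE mk.
  by rewrite Xk mk.
rewrite big1 ?c0 ?ks // => m _; rewrite Xk; case: eqP => // _.
by rewrite c0 ?ks.
Qed.

Lemma mproj_coef U p m :
  (mproj U p)@_m = if excluded_middle_informative (U m) then p@_m else 0.
Proof.
rewrite coef_sum_monos // => m'; rewrite mcoeff_msupp negbK => /eqP p0.
by case: excluded_middle_informative.
Qed.

Lemma mproj_in E p : is_ideal E -> E (mproj (fun m => E 'X_[m]) p).
Proof.
move=> HE; apply: big_ind; first by case: HE.
- by case: HE => _ ED _; apply: ED.
move=> m _; case: (excluded_middle_informative (E 'X_[m])) => [EXm|_] /=; first exact: ideal_scale.
by rewrite scale0r; case: HE.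
Qed.

End Supports.

Section LeadingMonomials.
Variables (K : fieldType) (n : nat) (le : 'X_{1..n} -> 'X_{1..n} -> Prop).
Hypothesis Hle : monomial_order le.
Local Notation poly := {mpoly K[n]}.
Local Notation mono := 'X_{1..n}.
Implicit Types (I : poly -> Prop) (f g p : poly) (m k : mono).

Definition lead_monos I m := exists f, [/\ I f, f != 0 & is_lead le f m].

Lemma seq_max (s : seq mono) :
  s != [::] -> exists2 m, m \in s & forall m', m' \in s -> le m' m.
Proof.
elim: s => [|x s IH] // _; case: (eqVneq s [::]) => [->|/IH [m ms Hm]].
  by exists x; rewrite ?mem_head // => m'; rewrite inE => /eqP ->; apply: (mo_refl Hle).
have [xm|mx] := mo_total Hle x m.
  by exists m; rewrite ?inE ?ms ?orbT // => m'; rewrite inE => /orP[/eqP ->|/Hm].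
exists x; rewrite ?mem_head // => m'; rewrite inE => /orP[/eqP ->|/Hm m'm].
  exact: (mo_refl Hle).
exact: (mo_trans Hle) m'm mx.
Qed.

Lemma lead_exists p : p != 0 -> exists m, is_lead le p m.
Proof. by rewrite -msupp_eq0 => /seq_max [m ? ?]; exists m. Qed.

Lemma lead_X m : is_lead le ('X_[m] : poly) m.
Proof.
rewrite /is_lead msuppX mem_head; split=> // m'; rewrite inE => /eqP ->.
exact: (mo_refl Hle).
Qed.

Lemma lead_mulX g m k : is_lead le g m -> is_lead le (g * 'X_[k]) (k + m)%MM.
Proof.
move=> [gm Hg]; split=> [|m']; rewrite (perm_mem (msuppMX g k)).
  by apply/mapP; exists m.
move=> /mapP[m'' m''g ->]; rewrite ![(k + _)%MM]addmC.
exact: (mo_mul Hle) (Hg _ m''g).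
Qed.

Lemma lead_monosD I m k : is_ideal I -> lead_monos I m -> lead_monos I (m + k)%MM.
Proof.
move=> HI [g [Ig gn0 lg]]; exists (g * 'X_[k]); split.
- by rewrite mulrC; apply: ideal_mul.
- by rewrite mulf_neq0 // -msupp_eq0 msuppX.
- by rewrite addmC; apply: lead_mulX.
Qed.

Lemma init_lead I m : lead_monos I m -> init_ideal le I 'X_[m].
Proof. by move=> [f [If fn0 lf]]; apply: ideal_gen_in; exists f, m. Qed.

Lemma init_supported I U :
  (forall m k, U m -> U (m + k)%MM) -> (forall m, lead_monos I m -> U m) ->
  forall f, init_ideal le I f -> supported_in U f.
Proof.
move=> Uup IU; apply: (supported_gen Uup) => _ [f [m [If fn0 lf ->]]].
by apply: supported_X; apply: IU; exists f.
Qed.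

Lemma init_mono I I' :
  (forall f, I f -> I' f) -> forall f, init_ideal le I f -> init_ideal le I' f.
Proof.
move=> II'; apply: ideal_gen_min; first exact: ideal_gen_ideal.
by move=> _ [f [m [If fn0 lf ->]]]; apply: init_lead; exists f; split=> //; apply: II'.
Qed.

End LeadingMonomials.

Section NormalForms.
Variables (K : fieldType) (n : nat) (le : 'X_{1..n} -> 'X_{1..n} -> Prop).
Hypothesis Hle : monomial_order le.
Variables (J : {mpoly K[n]} -> Prop).
Hypothesis HJ : is_ideal J.
Local Notation poly := {mpoly K[n]}.
Local Notation mono := 'X_{1..n}.
Implicit Types (f g p r : poly) (m : mono).

Definition normal_form p r :=
  J (p - r) /\ forall m, m \in msupp r -> ~ lead_monos le J m.

Lemma normal_form_J p : J p -> normal_form p 0.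
Proof. by move=> Jp; split=> [|m]; rewrite ?subr0 ?msupp0. Qed.

Lemma normal_form_reduced p :
  (forall m, m \in msupp p -> ~ lead_monos le J m) -> normal_form p p.
Proof. by move=> Np; split; rewrite // subrr; case: HJ. Qed.

Lemma normal_form_add p1 p2 r1 r2 :
  normal_form p1 r1 -> normal_form p2 r2 -> normal_form (p1 + p2) (r1 + r2).
Proof.
move=> [J1 N1] [J2 N2]; split.
  by rewrite opprD addrACA; case: HJ => _ JD _; apply: JD.
by move=> m /msuppD_le; rewrite mem_cat => /orP[/N1|/N2].
Qed.

Lemma normal_form_shift p p' r : J (p - p') -> normal_form p' r -> normal_form p r.
Proof.
move=> Jpp' [Jp'r Nr]; split=> //.
have -> : p - r = (p - p') + (p' - r) by ring.
by case: HJ => _ JD _; apply: JD.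
Qed.

(* Existence of normal forms: by well-founded induction on the leading monomial
   w of p, cancel the leading term either with an element of J whose leading
   monomial is w, or by moving it to the remainder. *)
Lemma normal_form_exists p : exists r, normal_form p r.
Proof.
have [->|pn0] := eqVneq p 0; first by exists 0; apply: normal_form_J; case: HJ.
have [w lw] := lead_exists Hle pn0.
elim/(well_founded_ind (mo_wf Hle)): w p pn0 lw => w IH p pn0 [wp Hw].
set c := p@_w.
have cancel_lead t : t@_w = c -> (forall m, m \in msupp t -> le m w) ->
    exists r, normal_form (p - t) r.
  move=> tw Ht; have [->|p'n0] := eqVneq (p - t) 0.
    by exists 0; apply: normal_form_J; case: HJ.
  have [w' [w's Hw']] := lead_exists Hle p'n0.
  have lew' : le w' w by move: w's => /msuppB_le; rewrite mem_cat => /orP[/Hw|/Ht].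
  have nw' : w' <> w by move=> Ew; move: w's; rewrite mcoeff_msupp Ew mcoeffB tw subrr eqxx.
  exact: (IH w' (conj lew' nw') _ p'n0).
have [[g [Jg _ [wg Hg]]]|nLw] := classic (lead_monos le J w).
- set d := g@_w; have dn0 : d != 0 by rewrite -mcoeff_msupp.
  have [r Nr] : exists r, normal_form (p - (c / d) *: g) r.
    apply: cancel_lead; first by rewrite mcoeffZ -/d divfK.
    by move=> m /msuppZ_le /Hg.
  by exists r; apply: normal_form_shift Nr; rewrite opprB addrC subrK; apply: ideal_scale.
- set s := c *: ('X_[w] : poly); have ss : msupp s = [:: w].
    by rewrite msuppMCX // /c -mcoeff_msupp.
  have [r Nr] : exists r, normal_form (p - s) r.
    apply: cancel_lead; first by rewrite mcoeffZ mcoeffX eqxx mulr1.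
    by move=> m; rewrite ss inE => /eqP ->; apply: (mo_refl Hle).
  exists (r + s); rewrite -[p](subrK s); apply: normal_form_add => //.
  by apply: normal_form_reduced => m; rewrite ss inE => /eqP ->.
Qed.

Lemma lead_in_normal_form p u r :
  is_lead le p u -> ~ lead_monos le J u -> normal_form p r -> u \in msupp r.
Proof.
move=> [up Hu] nLu [Jpr Nr]; rewrite mcoeff_msupp; apply/negP => /eqP ru.
have gu : (p - r)@_u != 0 by rewrite mcoeffB ru subr0 -mcoeff_msupp.
have gn0 : p - r != 0 by apply: contraNneq gu => ->; rewrite mcoeff0.
have [w [ws Hw]] := lead_exists Hle gn0.
have LMw : lead_monos le J w by exists (p - r).
have /Hw uw : u \in msupp (p - r) by rewrite mcoeff_msupp.
move: ws => /msuppB_le; rewrite mem_cat => /orP[/Hu wu|/Nr //].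
by apply: nLu; rewrite -(mo_anti Hle wu uw).
Qed.

End NormalForms.

Section GNicePairs.
Variables (K : fieldType) (n : nat) (le : 'X_{1..n} -> 'X_{1..n} -> Prop).
Hypothesis Hle : monomial_order le.
Variables (J : {mpoly K[n]} -> Prop).
Hypothesis HJ : is_ideal J.
Local Notation poly := {mpoly K[n]}.
Local Notation mono := 'X_{1..n}.
Implicit Types (E : poly -> Prop) (f g a r : poly) (m u : mono).

(* For a G-nice pair (J, E) with E monomial, every leading monomial of J + E is
   a leading monomial of J or a monomial of E: both sets are closed under
   multiplication by monomials, so they contain the support of in(J) + in(E). *)
Lemma gnice_lead E u : is_monomial_ideal E -> gnice le J E ->
  lead_monos le (ideal_add J E) u -> lead_monos le J u \/ E 'X_[u].
Proof.
move=> HEm nice Lu; have HE : is_ideal E by case: HEm.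
pose U m := lead_monos le J m \/ E 'X_[m].
have Uup m k : U m -> U (m + k)%MM.
  case=> [Jm|Em]; first by left; apply: lead_monosD.
  by right; rewrite mpolyXD mulrC; apply: ideal_mul.
have XuU : supported_in U ('X_[u] : poly).
  apply: (supported_gen Uup _ (proj1 (nice _) (init_lead Lu))) => g [].
  - by apply: init_supported => // m Lm; left.
  - apply: init_supported => // m [f [Ef _ [mf _]]]; right.
    exact: monomial_ideal_supp HEm Ef _ mf.
by apply: XuU; rewrite msuppX mem_head.
Qed.

(* If (J, E) is G-nice and E is monomial, the normal form modulo J of an
   element of E only involves monomials of E: otherwise the part of the normal
   form outside E would be a nonzero element of J + E whose leading monomial
   lies neither in in(J) nor in E. *)
Lemma normal_form_monomial_ideal E a r :
  is_monomial_ideal E -> gnice le J E -> E a -> normal_form le J a r ->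
  forall m, m \in msupp r -> E 'X_[m].
Proof.
move=> HEm nice Ea [Jar Nr]; have HE : is_ideal E by case: HEm.
pose V m := E 'X_[m].
have JEr' : ideal_add J E (r - mproj V r).
  have -> : r - mproj V r = (a - mproj V r) - (a - r) by ring.
  by apply: ideal_sub; [apply: ideal_gen_ideal | apply: ideal_gen_in; right;
    apply: ideal_sub => //; apply: mproj_in | apply: ideal_gen_in; left].
have r'0 : r - mproj V r = 0.
  apply/eqP; apply: contraT => nz; have [u lu] := lead_exists Hle nz.
  have Lu : lead_monos le (ideal_add J E) u by exists (r - mproj V r).
  move: (lu.1); rewrite mcoeff_msupp mcoeffB mproj_coef.
  case: (excluded_middle_informative (V u)) => [Vu|nVu] /=; first by rewrite subrr eqxx.
  rewrite subr0 -mcoeff_msupp => ur.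
  by case: (gnice_lead HEm nice Lu) => [/(Nr _ ur)|/nVu].
move=> m; move/eqP: r'0; rewrite subr_eq0 => /eqP {1}->.
rewrite mcoeff_msupp mproj_coef; case: (excluded_middle_informative (V m)) => [Vm|nVm] //=.
by rewrite eqxx.
Qed.

Section Family.
Variables (L : Type) (E : L -> poly -> Prop).
Hypothesis HE : forall i, is_monomial_ideal (E i).
Hypothesis Hnice : forall i, gnice le J (E i).

(* Every element of J + sum_i E_i has a normal form modulo J all of whose
   monomials lie in some E_i: this property contains J and each E_i and is
   stable under sums, normal forms being additive. *)
Lemma normal_form_family f : ideal_add J (ideal_bigsum E) f ->
  exists r, normal_form le J f r /\ supported_in (fun m => exists i, E i 'X_[m]) r.
Proof.
pose P f := exists r, normal_form le J f r /\
  supported_in (fun m => exists i, E i 'X_[m]) r.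
have PJ g : J g -> P g.
  by exists 0; split; [apply: normal_form_J | move=> m; rewrite msupp0].
have PD f1 f2 : P f1 -> P f2 -> P (f1 + f2).
  move=> [r1 [N1 S1]] [r2 [N2 S2]]; exists (r1 + r2); split; first exact: normal_form_add.
  by move=> m /msuppD_le; rewrite mem_cat => /orP[/S1|/S2].
have PE i g : E i g -> P g.
  move=> Eg; have [r Nr] := normal_form_exists Hle HJ g; exists r; split=> // m mr.
  by exists i; apply: normal_form_monomial_ideal Eg Nr _ mr.
have PB g : ideal_bigsum E g -> P g.
  apply: (ideal_gen_ind (P := P)); [by apply: PJ; case: HJ | exact: PD |].
  by move=> q h [i Eh]; apply: (PE i); apply: ideal_mul; first by case: (HE i).
apply: (ideal_gen_ind (P := P)); [by apply: PJ; case: HJ | exact: PD |].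
move=> q g [Jg|Bg]; first by apply: PJ; apply: ideal_mul.
by apply: PB; apply: ideal_mul => //; apply: ideal_gen_ideal.
Qed.

Lemma lead_monos_family u :
  lead_monos le (ideal_add J (ideal_bigsum E)) u ->
  lead_monos le J u \/ exists i, E i 'X_[u].
Proof.
move=> [f [Hf _ lf]]; have [Lu|nLu] := classic (lead_monos le J u); first by left.
have [r [Nr Sr]] := normal_form_family Hf.
by right; apply: Sr; apply: lead_in_normal_form lf nLu Nr.
Qed.

End Family.
End GNicePairs.

Theorem mainTheorem8 (K : fieldType) (n : nat)
  (le : 'X_{1..n} -> 'X_{1..n} -> Prop) (Hle : monomial_order le)
  (J : {mpoly K[n]} -> Prop) (HJ : is_ideal J)
  (L : Type) (E : L -> {mpoly K[n]} -> Prop)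
  (HE : forall i, is_monomial_ideal (E i))
  (Hnice : forall i, gnice le J (E i)) :
  gnice le J (ideal_bigsum E).
Proof.
move=> f; split; apply: ideal_gen_min; try exact: ideal_gen_ideal.
-
  move=> _ [g [u [Hg gn0 lg ->]]]; apply: ideal_gen_in.
  have Lu : lead_monos le (ideal_add J (ideal_bigsum E)) u by exists g.
  have [LJu|[i Eu]] := lead_monos_family Hle HJ HE Hnice Lu.
    by left; apply: init_lead.
  right; apply: init_lead; exists 'X_[u]; split; last exact: lead_X.
    by apply: ideal_gen_in; exists i.
  by rewrite -msupp_eq0 msuppX.
-
  by move=> g [] /init_mono; apply=> h Hh; apply: ideal_gen_in; [left|right].
Qed.
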